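(* Let $X=[0,\infty)$, $K(x,y)=x\wedge y$ on $X\times X$, and let $0<x_1<x_2<\cdots$ be real numbers and $(y_j)_{j\in\mathbb{N}}$ real numbers. If $\sum_{j\in\mathbb{N}}(y_{j+1}-y_j)^2/(x_{j+1}-x_j)<\infty$, then there exists $f\in\mathscr{H}(K)$ with $f(x_j)=y_j$ for all $j\in\mathbb{N}$.
   Context: $\mathscr{H}(K)$ is the reproducing kernel Hilbert space of $K(x,y)=\min(x,y)$ on $[0,\infty)$; it consists of the functions $f$ on $[0,\infty)$ with $f(0)=0$ and distributional derivative $f'\in L^2([0,\infty))$, with $\|f\|^2_{\mathscr{H}(K)}=\int_0^\infty|f'(x)|^2dx$. *)

From HB Require Import structures.
From mathcomp Require Import all_boot all_order all_algebra.
From mathcomp Require Import all_classical all_reals all_analysis.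
Set Implicit Arguments. Unset Strict Implicit. Unset Printing Implicit Defensive.
Import Order.TTheory GRing.Theory Num.Theory.
Import numFieldNormedType.Exports.
Local Open Scope classical_set_scope.
Local Open Scope ring_scope.

(* The reproducing kernel Hilbert space H(K) of K(x,y) = min(x,y) on [0,oo):
   functions f on [0,oo) with f(0) = 0 whose distributional derivative g lies
   in L^2([0,oo)), i.e. f(t) = \int_0^t g for t >= 0 with g square-integrable
   on [0,oo).  Functions on [0,oo) are represented as R -> R; values at
   negative arguments are irrelevant. *)
Definition in_HK_min (R : realType) (f : R -> R) : Prop :=
  exists g : R -> R,
    measurable_fun (`[0%R, +oo[%classic : set R) g /\
    (\int[lebesgue_measure]_(s in (`[0%R, +oo[%classic : set R)) ((g s) ^+ 2)%:E < +oo)%E /\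
    forall t : R, 0 <= t ->
      lebesgue_measure.-integrable (`[0%R, t]%classic : set R) (EFin \o g) /\
      f t = Rintegral lebesgue_measure (`[0%R, t]%classic : set R) g.

From HB Require Import structures.
From mathcomp Require Import all_boot all_order all_algebra.
From mathcomp Require Import all_classical all_reals all_analysis.
From mathcomp Require Import measurable_realfun ring lra.
Set Implicit Arguments. Unset Strict Implicit. Unset Printing Implicit Defensive.
Import Order.TTheory GRing.Theory Num.Theory.
Import numFieldNormedType.Exports.
Local Open Scope classical_set_scope.
Local Open Scope ring_scope.

(* Prepend the point (0, 0) to the data, so that f(0) = 0 becomes one more
   interpolation condition, and take for f the piecewise-linear interpolant:
   f(t) is the integral over [0, t] of the step function g equal to the slope
   (y_(j+1) - y_j) / (x_(j+1) - x_j) on ]x_j, x_(j+1)] and to 0 beyond sup x_j.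
   On each cell g^2 integrates to (y_(j+1) - y_j)^2 / (x_(j+1) - x_j), so
   g is square-integrable exactly under the hypothesis, and integrating g cell
   by cell telescopes to f(x_j) = y_j. *)

Lemma integrable_sqr_integrable (d : measure_display) (T : measurableType d)
    (R : realType) (mu : {measure set T -> \bar R}) (D : set T) (g : T -> R) :
  measurable D -> (mu D < +oo)%E -> measurable_fun D g ->
  (\int[mu]_(s in D) (g s ^+ 2)%:E < +oo)%E ->
  mu.-integrable D (EFin \o g).
Proof.
move=> mD muD mg g2; apply/integrableP; split; first exact/measurable_EFinP.
have mg2 : measurable_fun D (fun s => (g s ^+ 2)%:E).
  by apply/measurable_EFinP; exact: measurable_funX.
apply: (@le_lt_trans _ _ (\int[mu]_(s in D) (1 + (g s ^+ 2)%:E))%E).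
  apply: ge0_le_integral => //.
  - by apply: measurableT_comp => //; exact/measurable_EFinP.
  - by apply: emeasurable_funD => //; exact: measurable_cst.
  - move=> s _; rewrite /= -EFinD lee_fin -(real_normK (num_real (g s))).
    have := normr_ge0 (g s); nra.
rewrite ge0_integralD //; first by rewrite integral_cst // mul1e lte_add_pinfty.
by move=> s _; rewrite lee_fin sqr_ge0.
Qed.

Lemma lebesgue_measure_itv_oc (R : realType) (a b : R) :
  a < b -> lebesgue_measure (`]a, b]%classic : set R) = (b - a)%:E.
Proof. by move=> ab; rewrite lebesgue_measure_itv /= lte_fin ab -EFinD. Qed.

Section piecewise_linear.
Variable R : realType.
Variables X Y : nat -> R.
Hypothesis X_incr : forall j, X j < X j.+1.

Local Notation mu := (@lebesgue_measure R).

Definition slope (j : nat) : R := (Y j.+1 - Y j) / (X j.+1 - X j).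

Definition pl_deriv (s : R) : R :=
  let j := xget 0%N [set j | X j < s <= X j.+1] in
  if X j < s <= X j.+1 then slope j else 0.

Definition pl_energy : \bar R :=
  \sum_(0 <= j <oo) ((Y j.+1 - Y j) ^+ 2 / (X j.+1 - X j))%:E.

Lemma X_le : {homo X : i j / (i <= j)%N >-> i <= j}.
Proof. by apply: Order.NatMonotonyTheory.nondecnP => j; exact: ltW. Qed.

Lemma pl_deriv_cell j s : X j < s <= X j.+1 -> pl_deriv s = slope j.
Proof.
move=> sj; have cell_uniq i : X i < s <= X i.+1 -> i = j.
  move: sj => /andP[sj sj'] /andP[si si'].
  by case: (ltngtP i j) => // /X_le ?; exfalso; lra.
by rewrite /pl_deriv (xget_unique 0%N sj cell_uniq) sj.
Qed.

Lemma pl_deriv_out s : (forall j, ~~ (X j < s <= X j.+1)) -> pl_deriv s = 0.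
Proof. by move=> s_out; rewrite /pl_deriv (negbTE (s_out _)). Qed.

Lemma pl_deriv_le s : s <= X 0 -> pl_deriv s = 0.
Proof.
move=> sX0; apply: pl_deriv_out => j; apply/negP => /andP[+ _].
by have := X_le (leq0n j); lra.
Qed.

Lemma measurable_pl_deriv : measurable_fun setT pl_deriv.
Proof.
pose E n : set R :=
  if n is j.+1 then `]X j, X j.+1]%classic else ~` \bigcup_j `]X j, X j.+1]%classic.
have mE n : measurable (E n).
  case: n => [|j]; last exact: measurable_itv.
  by apply: measurableC; apply: bigcup_measurable => j _; exact: measurable_itv.
have -> : setT = \bigcup_n E n.
  apply/esym/seteqP; split=> // s _.
  have [[j _ sj]|s_out] := pselect ((\bigcup_j `]X j, X j.+1]%classic) s).
  - by exists j.+1.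
  - by exists 0%N.
apply/measurable_fun_bigcup => // -[|j].
- apply: (@eq_measurable_fun _ _ _ _ _ (cst (0 : R))); last exact: measurable_cst.
  move=> s /[!inE] s_out; rewrite pl_deriv_out // => j; apply/negP => sj.
  by apply: s_out; exists j => //=; rewrite in_itv.
- apply: (@eq_measurable_fun _ _ _ _ _ (cst (slope j))); last exact: measurable_cst.
  by move=> s /[!inE] /= /[!in_itv] /= sj; rewrite (pl_deriv_cell sj).
Qed.

Hypothesis X0_ge0 : 0 <= X 0.

Lemma pl_deriv_sqr_integral_le :
  (\int[mu]_(s in (`[0%R, +oo[%classic : set R)) (pl_deriv s ^+ 2)%:E <= pl_energy)%E.
Proof.
set D : set R := `[0, +oo[%classic.
have mD : measurable D by exact: measurable_itv.
pose h j s := (slope j ^+ 2 * \1_(`]X j, X j.+1]%classic) s)%:E.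
have h_ge0 j s : (0 <= h j s)%E by rewrite lee_fin mulr_ge0 ?sqr_ge0 // indicE ler0n.
have mh j : measurable_fun D (h j).
  by apply/measurable_EFinP/measurable_funM => //; exact: measurable_indic.
have int_h j : (\int[mu]_(s in D) h j s = ((Y j.+1 - Y j) ^+ 2 / (X j.+1 - X j))%:E)%E.
  rewrite /h; under eq_integral do rewrite EFinM.
  rewrite ge0_integralZl_EFin ?sqr_ge0 //; last first.
    by apply/measurable_EFinP; exact: measurable_indic.
  rewrite integral_indic // setIidl; last first.
    move=> s /=; rewrite in_itv /= => /andP[+ _].
    rewrite /D /= in_itv /= andbT => /ltW.
    exact/le_trans/(le_trans X0_ge0)/X_le.
  rewrite -[X in (_ * X)%E]/(mu `]X j, X j.+1]%classic) lebesgue_measure_itv_oc //.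
  rewrite -EFinM /slope; congr EFin.
  by field; rewrite subr_eq0 gt_eqF.
apply: (@le_trans _ _ (\int[mu]_(s in D) \sum_(j <oo) h j s)%E); last first.
  by rewrite integral_nneseries //; under eq_eseriesr do rewrite int_h.
apply: ge0_le_integral => //.
- by move=> s _; rewrite lee_fin sqr_ge0.
- apply/measurable_EFinP/measurable_funX.
  exact: measurable_funS measurable_pl_deriv.
- have := @ge0_emeasurable_sum _ _ _ D h predT
    (fun j s _ _ => h_ge0 j s) (fun j _ => mh j).
  by apply: eq_measurable_fun => s _; exact: eq_eseriesr.
- move=> s _; have [[j sj]|s_out] := pselect (exists j, X j < s <= X j.+1).
    rewrite (pl_deriv_cell sj); apply: le_trans (nneseries_lim_ge j.+1 _) => //.
    rewrite big_nat_recr //= -[X in (X <= _)%E]add0e; apply: leeD.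
      by apply: sume_ge0.
    by rewrite /h indicE mem_set ?mulr1 //= in_itv.
  rewrite pl_deriv_out ?expr0n /=; first exact: nneseries_ge0.
  by move=> j; apply/negP => sj; apply: s_out; exists j.
Qed.

Definition pl_interp (t : R) : R := Rintegral mu `[0, t]%classic pl_deriv.

Lemma pl_interp_X0 : pl_interp (X 0) = 0.
Proof.
rewrite /pl_interp (@eq_Rintegral _ _ _ _ _ (cst 0)); last first.
  by move=> s /[!inE] /= /[!in_itv] /= /andP[_ /pl_deriv_le].
by rewrite Rintegral_cst ?mul0r //; exact: measurable_itv.
Qed.

Section finite_energy.
Hypothesis pl_energy_fin : (pl_energy < +oo)%E.

Lemma integrable_pl_deriv t :
  0 <= t -> mu.-integrable `[0, t]%classic (EFin \o pl_deriv).
Proof.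
move=> t_ge0; apply: integrable_sqr_integrable.
- exact: measurable_itv.
- by have := lebesgue_measure_itv `[0, t]; case: ifP => _ /= ->; rewrite ?ltry.
- exact: measurable_funS measurable_pl_deriv.
apply: (le_lt_trans _ pl_energy_fin).
apply: le_trans pl_deriv_sqr_integral_le; apply: ge0_subset_integral => //.
- by apply/measurable_EFinP/measurable_funX; exact: measurable_funS measurable_pl_deriv.
- by move=> s _; rewrite lee_fin sqr_ge0.
- by move=> s /=; rewrite !in_itv /= => /andP[-> _].
Qed.

Lemma pl_interpS k : pl_interp (X k.+1) = pl_interp (X k) + (Y k.+1 - Y k).
Proof.
have X_ge0 j : 0 <= X j by apply: le_trans X0_ge0 (X_le (leq0n j)).
have split_itv : `[0, X k.+1]%classic = `[0, X k]%classic `|` `]X k, X k.+1]%classic.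
  by apply: itv_bndbnd_setU; rewrite bnd_simp ?X_ge0 // ltW.
rewrite /pl_interp split_itv Rintegral_setU //; first last.
- apply/disj_setPS => s [/=]; rewrite !in_itv /= => /andP[_ sXk] /andP[Xks _].
  by have := lt_le_trans Xks sXk; rewrite ltxx.
- by rewrite -split_itv; exact: integrable_pl_deriv.
congr (_ + _); rewrite (@eq_Rintegral _ _ _ _ _ (cst (slope k))); last first.
  by move=> s /[!inE] /= /[!in_itv] /= /pl_deriv_cell.
rewrite Rintegral_cst; last exact: measurable_itv.
rewrite -[X in fine X]/(mu `]X k, X k.+1]%classic) lebesgue_measure_itv_oc //= /slope.
by field; rewrite subr_eq0 gt_eqF.
Qed.

Lemma pl_interp_X k : pl_interp (X k) = Y k - Y 0.
Proof.
elim: k => [|k IHk]; first by rewrite pl_interp_X0 subrr.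
by rewrite pl_interpS IHk addrC addrA subrK.
Qed.

Lemma in_HK_min_pl_interp : in_HK_min pl_interp.
Proof.
exists pl_deriv; split; first exact: measurable_funS measurable_pl_deriv.
split; first exact: le_lt_trans pl_deriv_sqr_integral_le pl_energy_fin.
by move=> t t_ge0; split; first exact: integrable_pl_deriv.
Qed.

End finite_energy.

End piecewise_linear.

Theorem corollary10p7 (R : realType) (x y : nat -> R) :
  0 < x 0%N ->
  (forall j : nat, x j < x j.+1) ->
  (\sum_(0 <= j <oo) (((y j.+1 - y j) ^+ 2 / (x j.+1 - x j))%:E) < +oo)%E ->
  exists f : R -> R, in_HK_min f /\ forall j : nat, f (x j) = y j.
Proof.
move=> x0_gt0 x_incr energy_fin.
pose X j := if j is j'.+1 then x j' else 0.
pose Y j := if j is j'.+1 then y j' else 0.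
have X_incr j : X j < X j.+1 by case: j.
have X_energy_fin : (pl_energy X Y < +oo)%E.
  rewrite /pl_energy nneseries_recl //; last first.
    by move=> j _; rewrite lee_fin divr_ge0 ?sqr_ge0 // subr_ge0 ltW.
  rewrite -(nneseries_addn 1%N) => [|j]; last first.
    by rewrite lee_fin divr_ge0 ?sqr_ge0 // subr_ge0 ltW.
  rewrite lte_add_pinfty ?ltry //.
  by under eq_eseriesr do rewrite addn1.
exists (pl_interp X Y); split; first exact: in_HK_min_pl_interp X_energy_fin.
by move=> j; rewrite (pl_interp_X X_incr _ X_energy_fin j.+1) // subr0.
Qed.
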